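(* Let $\alpha$ be a propositional variable. There is no formula $\theta$ built from propositional variables and $\bot$ using only $\land,\lor,\rightarrow,\nabla$ (in particular not containing $\Delta$) such that for every nIML1-F1-model and every world $w$ of it, $w\Vdash\Delta\alpha$ iff $w\Vdash\theta$. That is, $\Delta$ is not definable in terms of the other connectives.
   Context: Formulas are built from a denumerable set $PV$ of propositional variables and $\bot$ using binary $\land,\lor,\rightarrow$ and unary $\Delta,\nabla$. An nIML1-model is a triple $\langle W,\mathcal{N},V\rangle$ with $W\neq\emptyset$, $\mathcal{N}:W\to P(P(W))$ satisfying for all $w$: (a) $w\in\bigcap\mathcal{N}_w$; (b) $\bigcap\mathcal{N}_w\in\mathcal{N}_w$; (c) $u\in\bigcap\mathcal{N}_w\Rightarrow\bigcap\mathcal{N}_u\subseteq\bigcap\mathcal{N}_w$; (d) $\bigcap\mathcal{N}_w\subseteq X\subseteq\bigcup\mathcal{N}_w\Rightarrow X\in\mathcal{N}_w$; (e) $u\in\bigcap\mathcal{N}_w\Rightarrow\bigcup\mathcal{N}_u\subseteq\bigcup\mathcal{N}_w$ ($\bigcap\mathcal{N}_w$, $\bigcup\mathcal{N}_w$ the intersection and union of the family $\mathcal{N}_w$), and $V:PV\to P(W)$ with $w\in V(q)\Rightarrow\bigcap\mathcal{N}_w\subseteq V(q)$. It is an nIML1-F1-model if moreover: whenever $u\in\bigcap\mathcal{N}_w$ and $v\in\bigcup\mathcal{N}_w$, there is $z$ with $z\in\bigcup\mathcal{N}_u\cap\bigcap\mathcal{N}_v$. Forcing: atoms via $V$; $\bot$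 never; $\land,\lor$ pointwise; $w\Vdash\varphi\rightarrow\psi$ iff every $v\in\bigcap\mathcal{N}_w$ has $v\nVdash\varphi$ or $v\Vdash\psi$; $w\Vdash\Delta\varphi$ iff every $v\in\bigcup\mathcal{N}_w$ has $v\Vdash\varphi$; $w\Vdash\nabla\varphi$ iff some $v\in\bigcup\mathcal{N}_w$ has $v\Vdash\varphi$. *)

Inductive form : Type :=
| Var : nat -> form
| Bot : form
| And : form -> form -> form
| Or : form -> form -> form
| Imp : form -> form -> form
| Delta : form -> form
| Nabla : form -> form.

Fixpoint delta_free (f : form) : Prop :=
  match f with
  | Var _ | Bot => True
  | And a b | Or a b | Imp a b => delta_free a /\ delta_free b
  | Delta _ => False
  | Nabla a => delta_free a
  end.

Definition bigcap {W : Type} (N : (W -> Prop) -> Prop) : W -> Prop :=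
  fun x => forall X, N X -> X x.
Definition bigcup {W : Type} (N : (W -> Prop) -> Prop) : W -> Prop :=
  fun x => exists X, N X /\ X x.
Definition subset {W : Type} (A B : W -> Prop) : Prop := forall x, A x -> B x.

(* N is extensional in its argument sets: sets are identified with predicates,
   so we require membership to respect extensional equality of sets. *)
Record nIML1_model : Type := {
  world : Type;
  world_inhabited : inhabited world;
  nbhd : world -> (world -> Prop) -> Prop;
  val : nat -> world -> Prop;
  nbhd_ext : forall w X Y, (forall x, X x <-> Y x) -> nbhd w X -> nbhd w Y;
  cond_a : forall w, bigcap (nbhd w) w;
  cond_b : forall w, nbhd w (bigcap (nbhd w));
  cond_c : forall w u, bigcap (nbhd w) u ->
             subset (bigcap (nbhd u)) (bigcap (nbhd w));
  cond_d : forall w X, subset (bigcap (nbhd w)) X -> subset X (bigcup (nbhd w)) ->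
             nbhd w X;
  cond_e : forall w u, bigcap (nbhd w) u ->
             subset (bigcup (nbhd u)) (bigcup (nbhd w));
  val_pers : forall q w, val q w -> subset (bigcap (nbhd w)) (val q)
}.

Definition F1 (M : nIML1_model) : Prop :=
  forall w u v, bigcap (nbhd M w) u -> bigcup (nbhd M w) v ->
    exists z, bigcup (nbhd M u) z /\ bigcap (nbhd M v) z.

Fixpoint forces (M : nIML1_model) (w : world M) (f : form) : Prop :=
  match f with
  | Var q => val M q w
  | Bot => False
  | And a b => forces M w a /\ forces M w b
  | Or a b => forces M w a \/ forces M w b
  | Imp a b => forall v, bigcap (nbhd M w) v -> ~ forces M v a \/ forces M v b
  | Delta a => forall v, bigcup (nbhd M w) v -> forces M v a
  | Nabla a => exists v, bigcup (nbhd M w) v /\ forces M v a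
  end.

From Stdlib Require Import Setoid.

(* A delta-free formula cannot tell the top world of the two-element chain
   false <= true (where alpha holds only at true) from the one-point model
   where alpha holds.  Implication at the top only looks upward, and a Nabla
   witness anywhere in the chain can be pushed up to the top by persistence.
   But Delta alpha holds at the point and fails at the top of the chain,
   whose neighbourhoods also cover the lower world. *)

Section Persistence.

Variable M : nIML1_model.

(* Condition (e) gives only the opposite inclusion, which is what Delta needs;
   Nabla needs this one. *)
Hypothesis bigcup_persistent :
  forall w u, bigcap (nbhd M w) u -> subset (bigcup (nbhd M w)) (bigcup (nbhd M u)).

Lemma forces_persistent (phi : form) (w u : world M) :
  bigcap (nbhd M w) u -> forces M w phi -> forces M u phi.
Proof.
  revert w u; induction phi as [q| |a IHa b IHb|a IHa b IHb|a IHa b IHb|a IHa|a IHa];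
    intros w u Hwu; simpl.
  - intros Hq; exact (val_pers M q w Hq u Hwu).
  - tauto.
  - intros [Ha Hb]; split; [exact (IHa w u Hwu Ha)|exact (IHb w u Hwu Hb)].
  - intros [Ha|Hb]; [left; exact (IHa w u Hwu Ha)|right; exact (IHb w u Hwu Hb)].
  - intros Himp v Huv; exact (Himp v (cond_c M w u Hwu v Huv)).
  - intros Hall v Hv; exact (Hall v (cond_e M w u Hwu v Hv)).
  - intros [v [Hv Ha]]; exists v; split; [exact (bigcup_persistent w u Hwu v Hv)|exact Ha].
Qed.

End Persistence.

(* A reflexive transitive frame with a persistent valuation, read as a
   neighbourhood model: the neighbourhoods of w are the supersets of the
   up-set of w, so their intersection is the up-set and their union is
   the whole frame. *)
Section KripkeModel.

Variables (W : Type) (w0 : W) (R : W -> W -> Prop) (V : nat -> W -> Prop).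
Hypothesis R_refl : forall w, R w w.
Hypothesis R_trans : forall w u v, R w u -> R u v -> R w v.
Hypothesis V_pers : forall q w u, V q w -> R w u -> V q u.

Definition up_nbhd (w : W) (X : W -> Prop) : Prop := forall x, R w x -> X x.

Lemma bigcap_up_nbhd w x : bigcap (up_nbhd w) x <-> R w x.
Proof.
  split.
  - intros Hx; apply Hx; intros y Hy; exact Hy.
  - intros Hwx X HX; exact (HX x Hwx).
Qed.

Lemma bigcup_up_nbhd w x : bigcup (up_nbhd w) x.
Proof. exists (fun _ => True); split; [intros y _|]; exact I. Qed.

Definition kripke_model : nIML1_model.
Proof.
  refine {| world := W; nbhd := up_nbhd; val := V |}.
  - exact (inhabits w0).
  - intros w X Y HXY HX y Hy; apply HXY, HX, Hy.
  - intros w; apply bigcap_up_nbhd, R_refl.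
  - intros w y Hy; apply bigcap_up_nbhd, Hy.
  - intros w u Hwu x Hux; apply bigcap_up_nbhd in Hwu; apply bigcap_up_nbhd in Hux.
    apply bigcap_up_nbhd; exact (R_trans w u x Hwu Hux).
  - intros w X HX _ y Hy; apply HX, bigcap_up_nbhd, Hy.
  - intros w u _ x _; apply bigcup_up_nbhd.
  - intros q w Hq u Hwu; apply bigcap_up_nbhd in Hwu; exact (V_pers q w u Hq Hwu).
Defined.

Lemma kripke_model_F1 : F1 kripke_model.
Proof.
  intros w u v _ _; exists v; split.
  - apply bigcup_up_nbhd.
  - apply bigcap_up_nbhd, R_refl.
Qed.

Lemma kripke_forces_persistent (phi : form) (w u : W) :
  R w u -> forces kripke_model w phi -> forces kripke_model u phi.
Proof.
  intros Hwu; apply forces_persistent.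
  - intros w' u' _ x _; apply bigcup_up_nbhd.
  - apply bigcap_up_nbhd, Hwu.
Qed.

Lemma kripke_forces_Imp (a b : form) (w : W) :
  forces kripke_model w (Imp a b) <->
  forall v, R w v -> ~ forces kripke_model v a \/ forces kripke_model v b.
Proof.
  split; intros H v Hv; apply H, bigcap_up_nbhd, Hv.
Qed.

Lemma kripke_forces_Nabla (a : form) (w : W) :
  forces kripke_model w (Nabla a) <-> exists v, forces kripke_model v a.
Proof.
  split.
  - intros [v [_ Hv]]; exists v; exact Hv.
  - intros [v Hv]; exists v; split; [apply bigcup_up_nbhd|exact Hv].
Qed.

End KripkeModel.

Definition point_model : nIML1_model :=
  kripke_model unit tt (fun _ _ => True) (fun _ _ => True)
    (fun _ => I) (fun _ _ _ _ _ => I) (fun _ _ _ _ _ => I).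

Definition chain_model : nIML1_model :=
  kripke_model bool true (fun w x => w = true -> x = true) (fun _ x => x = true)
    (fun _ Hw => Hw) (fun _ _ _ Hwu Huv Hw => Huv (Hwu Hw)) (fun _ _ _ Hw Hwu => Hwu Hw).

Lemma point_model_F1 : F1 point_model.
Proof. apply kripke_model_F1. Qed.

Lemma chain_model_F1 : F1 chain_model.
Proof. apply kripke_model_F1. Qed.

Lemma chain_forces_top (phi : form) (w : bool) :
  forces chain_model w phi -> forces chain_model true phi.
Proof. apply kripke_forces_persistent; intros _; reflexivity. Qed.

Lemma chain_top_point_equiv (phi : form) :
  delta_free phi -> (forces chain_model true phi <-> forces point_model tt phi).
Proof.
  induction phi as [q| |a IHa b IHb|a IHa b IHb|a IHa b IHb|a IHa|a IHa];
    simpl delta_free; intros Hfree.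
  1-4: simpl; tauto.
  - destruct Hfree as [Hfree_a Hfree_b].
    specialize (IHa Hfree_a); specialize (IHb Hfree_b).
    unfold chain_model, point_model; rewrite !kripke_forces_Imp.
    split; intros H v Hv.
    + destruct v; destruct (H true (fun _ => eq_refl)); tauto.
    + rewrite (Hv eq_refl); destruct (H tt I); tauto.
  - contradiction.
  - unfold chain_model, point_model; rewrite !kripke_forces_Nabla.
    split.
    + intros [v Hv]; exists tt; apply (IHa Hfree), (chain_forces_top a v Hv).
    + intros [[] Hv]; exists true; apply (IHa Hfree), Hv.
Qed.

Theorem lemma9p3 (alpha : nat) :
  ~ exists theta : form,
      delta_free theta /\
      forall (M : nIML1_model), F1 M ->
        forall w : world M, forces M w (Delta (Var alpha)) <-> forces M w theta.
Proof.
  intros [theta [Hfree Hdefines]].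
  assert (Hpoint : forces point_model tt theta).
  { apply (Hdefines point_model point_model_F1 tt); intros v _; exact I. }
  assert (Hchain : forces chain_model true (Delta (Var alpha))).
  { apply (Hdefines chain_model chain_model_F1 true).
    apply (chain_top_point_equiv theta Hfree), Hpoint. }
  assert (Hfalse : forces chain_model false (Var alpha)).
  { apply Hchain, bigcup_up_nbhd. }
  discriminate Hfalse.
Qed.
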